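(* Let $q$ be a prime power and $k,\delta,\alpha$ positive integers with $\alpha\ge2$, $\delta\le(\alpha-1)k$ and $(\alpha-1)\mid(\delta-1)$. Then, with $q,k,\delta,\alpha$ fixed and $n\to\infty$, $$B_q(n,k,\delta;\alpha)=\Theta\!\left(q^{\left(k-\frac{\delta-1}{\alpha-1}\right)n}\right).$$
   Context: For a prime power $q$, $\mathcal{G}_q(n,k)$ denotes the set of all $k$-dimensional subspaces of $\mathbb{F}_q^n$. An $\alpha$-$(n,k,\delta)_q^c$ covering Grassmannian code is a subset $\mathcal{C}\subseteq\mathcal{G}_q(n,k)$ (no repeated codewords) such that every set of $\alpha$ distinct codewords of $\mathcal{C}$ spans a subspace of $\mathbb{F}_q^n$ of dimension at least $k+\delta$. $B_q(n,k,\delta;\alpha)$ denotes the maximum size of an $\alpha$-$(n,k,\delta)_q^c$ code. The implied constants in $\Theta(\cdot)$ may depend on $q,k,\delta,\alpha$ but not on $n$. *)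

From HB Require Import structures.
From mathcomp Require Import all_boot all_order all_algebra all_field.
Set Implicit Arguments. Unset Strict Implicit. Unset Printing Implicit Defensive.
Import GRing.Theory.

Import VectorInternalTheory.
Section FinVspace.
Variables (F : finFieldType) (vT : vectType F).
HB.instance Definition _ := [Countable of @space F vT by <:].
HB.instance Definition _ := [Finite of @space F vT by <:].
End FinVspace.

Definition grassmannian (F : finFieldType) (n k : nat) : {set {vspace 'rV[F]_n}} :=
  [set U : {vspace 'rV[F]_n} | \dim U == k].

Definition covering_code (F : finFieldType) (n k delta alpha : nat)
    (C : {set {vspace 'rV[F]_n}}) : bool :=
  (C \subset grassmannian F n k) &&
  [forall S : {set {vspace 'rV[F]_n}},
     ((S \subset C) && (#|S| == alpha)) ==> (k + delta <= \dim (\sum_(U in S) U)%VS)].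

Definition Bq (F : finFieldType) (n k delta alpha : nat) : nat :=
  \max_(C : {set {vspace 'rV[F]_n}} | covering_code k delta alpha C) #|C|.

(* Upper bound: send each codeword U to the span tau U of the first
   e = k - (delta - 1) / (alpha - 1) vectors of a basis of U.  Codewords with
   the same image contain a common e-space, so alpha of them would span at
   most e + alpha (k - e) = k + delta - 1 dimensions; hence each of the at most
   q^(n e) e-spaces is the image of fewer than alpha codewords.
   Lower bound (deletion method): an alpha-set of k-spaces spanning fewer than
   k + delta dimensions lies in a (k + delta - 1)-space, so there are
   O(q^(n (k + delta - 1))) of them, while there are at least q^(k (n - k))
   k-spaces (graphs of k x (n - k) matrices).  As
   (k + delta - 1) + e (alpha - 1) = k alpha, a random family of
   s ~ q^(e n) k-spaces contains on average at most s / 2 degenerate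
   alpha-sets, and removing one member of each leaves a code of size s / 2. *)

From mathcomp Require Import all_boot all_order all_algebra all_field.
From mathcomp Require Import zify ring.
Set Implicit Arguments. Unset Strict Implicit. Unset Printing Implicit Defensive.

Lemma bin_ratio_leq N s a : a <= s -> s <= N ->
  'C(N - a, s - a) * N ^ a <= 'C(N, s) * s ^ a.
Proof.
move=> le_as le_sN; elim: a le_as => [|a IHa] lt_as; first by rewrite !subn0.
have {IHa} IHa := IHa (ltnW lt_as).
have diag := mul_bin_diag (N - a) (s - a.+1); rewrite subnSK // -subnS in diag.
rewrite -(@leq_pmul2l (N - a)); last lia.
have -> : (N - a) * ('C(N - a.+1, s - a.+1) * N ^ a.+1) =
          N * (s - a) * ('C(N - a, s - a) * N ^ a) by rewrite expnS mulnA diag; ring.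
have -> : (N - a) * ('C(N, s) * s ^ a.+1) = (N - a) * s * ('C(N, s) * s ^ a).
  by rewrite expnS; ring.
by apply: leq_mul; [nia | exact: IHa].
Qed.

Section DeletionMethod.
Variable T : finType.

Lemma leq_card_bigcup (I : finType) (P : pred I) (A : I -> {set T}) :
  #|\bigcup_(i | P i) A i| <= \sum_(i | P i) #|A i|.
Proof.
elim/big_rec2: _ => [|i U n _ leUn]; first by rewrite cards0.
by apply: leq_trans (leq_card_setU _ _).1 _; rewrite leq_add2l.
Qed.

Lemma card_draws_supset (P S : {set T}) s : S \subset P ->
  #|[set Y : {set T} | [&& Y \subset P, #|Y| == s & S \subset Y]]| <=
  'C(#|P| - #|S|, s - #|S|).
Proof.
move=> sSP; have -> : #|P| - #|S| = #|P :\: S| by rewrite cardsD (setIidPr sSP).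
rewrite -cards_draws.
apply: leq_trans (leq_imset_card (fun Z => Z :|: S) _).
apply/subset_leq_card/subsetP => Y; rewrite inE => /and3P [sYP /eqP cY sSY].
apply/imsetP; exists (Y :\: S).
  by rewrite inE setSD //= cardsD (setIidPr sSY) cY.
apply/setP => x; rewrite !inE.
by case: (boolP (x \in S)) => [/(subsetP sSY) ->|]; rewrite ?orbT ?orbF.
Qed.

Lemma exists_subset_card (A : {set T}) a : a <= #|A| ->
  exists2 S : {set T}, S \subset A & #|S| = a.
Proof.
move=> le_aA; have : 0 < #|[set S : {set T} | S \subset A & #|S| == a]|.
  by rewrite cards_draws bin_gt0.
by rewrite card_gt0 => /set0Pn [S]; rewrite inE => /andP [sSA /eqP cS]; exists S.
Qed.

Variables (P : {set T}) (Bad : {set {set T}}) (a : nat).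
Hypothesis BadP : forall S, S \in Bad -> S \subset P /\ #|S| = a.

Definition bad_in (Y : {set T}) := [set S in Bad | S \subset Y].

(* Averaging over all s-subsets Y of P. *)
Lemma exists_draw_few_bad s : s <= #|P| ->
  exists2 Y : {set T}, Y \subset P /\ #|Y| = s &
    'C(#|P|, s) * #|bad_in Y| <= #|Bad| * 'C(#|P| - a, s - a).
Proof.
move=> leSP; pose Ys := [set Y : {set T} | (Y \subset P) && (#|Y| == s)].
have cYs : #|Ys| = 'C(#|P|, s) by rewrite cards_draws.
have sum_bad : \sum_(Y in Ys) #|bad_in Y| <= #|Bad| * 'C(#|P| - a, s - a).
  under eq_bigr => Y _ do rewrite -sum1dep_card.
  rewrite (exchange_big_dep (fun S => S \in Bad)) /=; last by move=> Y S _ /andP[].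
  rewrite -sum_nat_const; apply: leq_sum => S SBad.
  have [sSP <-] := BadP SBad.
  apply: leq_trans (card_draws_supset s sSP).
  rewrite sum1dep_card; apply/subset_leq_card/subsetP => Y.
  by rewrite !inE => /andP [/andP [-> ->] /andP [_ ->]].
have [Y0 Y0s] : exists Y0, Y0 \in Ys.
  by apply/set0Pn; rewrite -card_gt0 cYs bin_gt0.
case: (arg_minnP (fun Y => #|bad_in Y|) Y0s) => Y YYs minY.
have /[!inE] /andP [sYP /eqP cY] : Y \in Ys by [].
exists Y => //; apply: leq_trans sum_bad.
by rewrite -cYs -sum_nat_const; apply: leq_sum.
Qed.

(* Remove one point of each bad set contained in Y. *)
Lemma exists_avoiding_subset (Y : {set T}) : 0 < a ->
  exists2 X : {set T}, X \subset Y /\ (forall S, S \in Bad -> ~~ (S \subset X)) &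
    #|Y| <= #|X| + #|bad_in Y|.
Proof.
move=> a_gt0; pose R := \bigcup_(S in bad_in Y) [set x | [pick z in S] == Some x].
have cR : #|R| <= #|bad_in Y|.
  apply: leq_trans (leq_card_bigcup _ _) _; rewrite -sum1_card; apply: leq_sum => S _.
  case: [pick z in S] => [z|].
    by rewrite (_ : [set x | _] = [set z]) ?cards1 //; apply/setP => x; rewrite !inE eq_sym.
  by rewrite (_ : [set x | _] = set0) ?cards0 //; apply/setP => x; rewrite !inE.
exists (Y :\: R); last first.
  have := subset_leq_card (subsetIl Y R); have := subset_leq_card (subsetIr Y R).
  rewrite cardsD; lia.
split=> [|S SBad]; first exact: subsetDl.
apply/negP => sSX; have [_ cS] := BadP SBad.
have [x xS] : exists x, x \in S by apply/set0Pn; rewrite -card_gt0 cS.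
have [z zS pickS] : exists2 z, z \in S & [pick z in S] = Some z.
  by case: pickP => [z zS | /(_ x)]; [exists z | rewrite xS].
have zR : z \in R.
  apply/bigcupP; exists S; first by rewrite inE SBad (subset_trans sSX (subsetDl _ _)).
  by rewrite inE pickS.
by have := subsetP sSX z zS; rewrite inE zR.
Qed.

Lemma deletion_method s : 0 < a -> a <= s <= #|P| ->
  exists2 X : {set T}, X \subset P /\ (forall S, S \in Bad -> ~~ (S \subset X)) &
    (s - #|X|) * #|P| ^ a <= #|Bad| * s ^ a.
Proof.
move=> a_gt0 /andP [le_as le_sP].
have [Y [sYP cY] fewY] := exists_draw_few_bad le_sP.
have [X [sXY avoidX] cX] := exists_avoiding_subset Y a_gt0.
exists X; first by split=> //; apply: subset_trans sYP.
rewrite -(@leq_pmul2l 'C(#|P|, s)) ?bin_gt0 //.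
apply: (@leq_trans (#|Bad| * ('C(#|P| - a, s - a) * #|P| ^ a))).
  rewrite mulnA (mulnA #|Bad|) leq_mul2r; apply/orP; right.
  by apply: leq_trans fewY; rewrite leq_mul2l -cY leq_subLR cX orbT.
by rewrite [X in _ <= X]mulnCA leq_mul2l bin_ratio_leq ?orbT.
Qed.
End DeletionMethod.

Local Open Scope ring_scope.

Section Subspaces.
Variables (F : finFieldType) (vT : vectType F).

Lemma mem_nth_vbasis (U : {vspace vT}) j : (vbasis U)`_j \in U.
Proof.
have [lt_j|le_j] := ltnP j (size (vbasis U)); last by rewrite nth_default ?mem0v.
exact/vbasis_mem/mem_nth.
Qed.

(* Beyond \dim U the sequence (vbasis U)`_j is padded with zeros. *)
Lemma span_nth_vbasis (U : {vspace vT}) d : (\dim U <= d)%N ->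
  <<[seq (vbasis U)`_j | j <- iota 0 d]>>%VS = U.
Proof.
move=> le_Ud; apply/eqP; rewrite eqEsubv; apply/andP; split.
  by apply/span_subvP => _ /mapP [j _ ->]; apply: mem_nth_vbasis.
rewrite -{1}(span_basis (vbasisP U)); apply: sub_span => x xU.
apply/mapP; exists (index x (vbasis U)); last by rewrite nth_index.
have := xU; rewrite -index_mem size_tuple => lt_x.
by rewrite mem_iota add0n (leq_trans lt_x le_Ud).
Qed.

Lemma card_subspaces_leq (W0 : {vspace vT}) d (A : {set {vspace vT}}) :
  (forall W, W \in A -> \dim W <= d /\ (W <= W0)%VS)%N ->
  (#|A| <= #|F| ^ (\dim W0 * d))%N.
Proof.
move=> AP.
pose f (W : {vspace vT}) : {ffun 'I_d -> {ffun 'I_(\dim W0) -> F}} :=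
  [ffun j : 'I_d => [ffun i => coord (vbasis W0) i (vbasis W)`_j]].
suff f_inj : {in A &, injective f}.
  rewrite -(card_in_imset f_inj) (leq_trans (max_card _)) //.
  by rewrite !card_ffun !card_ord expnM.
move=> W1 W2 /AP [le_W1d sW1] /AP [le_W2d sW2] eq_f.
rewrite -(span_nth_vbasis le_W1d) -(span_nth_vbasis le_W2d); congr <<_>>%VS.
apply/eq_in_map => j; rewrite mem_iota add0n => /andP [_ lt_jd].
have W0nth W : (W <= W0)%VS -> (vbasis W)`_j \in W0.
  by move=> sW; apply: subvP sW _ (mem_nth_vbasis _ _).
rewrite (coord_vbasis (W0nth _ sW1)) (coord_vbasis (W0nth _ sW2)).
apply: eq_bigr => i _; congr (_ *: _).
pose eval_at (g : {ffun 'I_d -> {ffun 'I_(\dim W0) -> F}}) := g (Ordinal lt_jd) i.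
by have := congr1 eval_at eq_f; rewrite /eval_at !ffunE.
Qed.

Lemma dim_span_take_vbasis (U : {vspace vT}) e : (e <= \dim U)%N ->
  \dim <<take e (vbasis U)>> = e.
Proof.
move=> le_eU; suff /eqP -> : free (take e (vbasis U)) by rewrite size_takel ?size_tuple.
apply: (@catl_free _ _ (drop e (vbasis U))).
by rewrite cat_take_drop (basis_free (vbasisP U)).
Qed.

Lemma span_take_vbasis_sub (U : {vspace vT}) e : (<<take e (vbasis U)>> <= U)%VS.
Proof. by apply/span_subvP => x /mem_take; apply: vbasis_mem. Qed.

Lemma dimv_add_sum_leq (T : {vspace vT}) (I : Type) (r : seq I) (P : pred I)
    (U : I -> {vspace vT}) : (forall i, P i -> T <= U i)%VS ->
  (\dim (T + \sum_(i <- r | P i) U i) <=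
     \dim T + \sum_(i <- r | P i) (\dim (U i) - \dim T))%N.
Proof.
move=> TU; elim/big_rec2: _ => [|i m Y Pi IH]; first by rewrite addv0 addn0.
have sTUi := TU i Pi.
have -> : (T + (U i + Y) = U i + (T + Y))%VS by rewrite addvA (addvC T) addvA.
have Tcap : (\dim T <= \dim (U i :&: (T + Y)))%N by rewrite dimvS // subv_cap sTUi addvSl.
have := dimv_sum_cap (U i) (T + Y)%VS; have := dimvS sTUi; lia.
Qed.
End Subspaces.

Section GraphSpaces.
Variables (F : finFieldType) (k m : nat).
Implicit Types (B : 'M[F]_(k, m)) (u : 'rV[F]_k).

Definition graph_basis B : k.-tuple 'rV[F]_(k + m) :=
  [tuple row_mx (delta_mx 0 i) (row i B) | i < k].

Definition graph_space B := <<graph_basis B>>%VS.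

Lemma graph_basis_comb B u :
  \sum_(i < k) u 0 i *: (graph_basis B)`_i = row_mx u (u *m B).
Proof.
under eq_bigr => i _ do rewrite nth_mktuple scale_row_mx.
rewrite mulmx_sum_row [X in row_mx X _]row_sum_delta.
elim/big_rec3: _ => [|i x y z _ ->]; first by rewrite row_mx0.
by rewrite add_row_mx.
Qed.

Lemma graph_basis_free B : free (graph_basis B).
Proof.
apply/freeP => c c0 i; pose u := \row_i c i.
have := graph_basis_comb B u; under eq_bigr => j _ do rewrite mxE.
rewrite c0 => /esym /eqP; rewrite row_mx_eq0 => /andP [/eqP u0 _].
by have := congr1 (fun v : 'rV_k => v 0 i) u0; rewrite !mxE.
Qed.

Lemma dim_graph_space B : \dim (graph_space B) = k.
Proof. by rewrite (eqP (graph_basis_free B)) size_tuple. Qed.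

Lemma memv_graph_space B v :
  v \in graph_space B -> exists u, v = row_mx u (u *m B).
Proof.
move=> /coord_span ->; exists (\row_j coord (graph_basis B) j v).
by rewrite -graph_basis_comb; apply: eq_bigr => j _; rewrite mxE.
Qed.

Lemma graph_space_inj : injective graph_space.
Proof.
move=> B1 B2 eqB; apply/row_matrixP => i.
have /memv_graph_space [u] : (graph_basis B1)`_i \in graph_space B2.
  by rewrite -eqB memv_span // mem_nth // size_tuple.
by rewrite nth_mktuple => /eq_row_mx [<- ->]; rewrite rowE.
Qed.

Lemma card_grassmannian_geq : (#|F| ^ (k * m) <= #|grassmannian F (k + m) k|)%N.
Proof.
rewrite -card_mx -(card_imset _ graph_space_inj); apply/subset_leq_card/subsetP.
by move=> _ /imsetP [B _ ->]; rewrite inE dim_graph_space.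
Qed.
End GraphSpaces.

Local Close Scope ring_scope.

Section CoveringCodes.
Variable F : finFieldType.

Lemma card_subspaces_rV_leq n d (A : {set {vspace 'rV[F]_n}}) :
  (forall W, W \in A -> \dim W <= d) -> #|A| <= #|F| ^ (n * d).
Proof.
move=> AP; have := @card_subspaces_leq _ _ fullv d A.
have dim_full : \dim (fullv : {vspace 'rV[F]_n}) = n.
  by rewrite dimvf dim_matrix; exact: mul1n.
by rewrite dim_full; apply=> W /AP; rewrite subvf.
Qed.

Lemma covering_code_card_leq n k delta alpha e (C : {set {vspace 'rV[F]_n}}) :
  e <= k -> e + alpha * (k - e) < k + delta -> covering_code k delta alpha C ->
  #|C| <= (alpha - 1) * #|F| ^ (n * e).
Proof.
move=> le_ek lt_dim /andP [sCG /forallP codeC].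
pose tau (U : {vspace 'rV[F]_n}) := <<take e (vbasis U)>>%VS.
have dimC U : U \in C -> \dim U = k by move/(subsetP sCG); rewrite inE => /eqP.
pose Ws := [set W : {vspace 'rV[F]_n} | \dim W == e].
rewrite -sum1_card (partition_big tau (mem Ws)) /=; last first.
  by move=> U UC; rewrite inE dim_span_take_vbasis // dimC.
apply: (@leq_trans (\sum_(W in Ws) (alpha - 1))); last first.
  rewrite sum_nat_const mulnC leq_mul2l card_subspaces_rV_leq ?orbT //.
  by move=> W; rewrite inE => /eqP ->.
apply: leq_sum => W; rewrite inE => /eqP dimW; rewrite sum1dep_card leqNgt.
set fib := [set _ | _]; apply/negP => lt_fib.
have /exists_subset_card [S sSfib cS] : alpha <= #|fib| by lia.
have sSC : S \subset C.
  by apply: subset_trans sSfib _; apply/subsetP => U; rewrite inE => /andP [].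
have WS U : U \in S -> (W <= U)%VS /\ \dim U = k.
  move/(subsetP sSfib); rewrite inE => /andP [UC /eqP <-].
  by rewrite span_take_vbasis_sub dimC.
have := codeC S; rewrite sSC cS eqxx /= => le_dimS.
have : \dim (\sum_(U in S) U)%VS <= e + alpha * (k - e).
  apply: leq_trans (dimvS (addvSr W _)) _.
  apply: leq_trans (dimv_add_sum_leq _ (fun U US => (WS U US).1)) _.
  by rewrite dimW (eq_bigr (fun _ => k - e)) ?sum_nat_const ?cS // => U /WS [_ ->].
by move=> /(leq_trans le_dimS)/leq_ltn_trans/(_ lt_dim); rewrite ltnn.
Qed.

Lemma Bq_upper n k delta alpha e : e <= k ->
  e + alpha * (k - e) < k + delta -> Bq F n k delta alpha <= (alpha - 1) * #|F| ^ (n * e).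
Proof.
by move=> le_ek lt_dim; apply/bigmax_leqP => C; apply: covering_code_card_leq.
Qed.

Definition degenerate_sets n k delta alpha : {set {set {vspace 'rV[F]_n}}} :=
  [set S : {set {vspace 'rV[F]_n}} |
    [&& S \subset grassmannian F n k, #|S| == alpha & \dim (\sum_(U in S) U)%VS < k + delta]].

(* A degenerate set is a set of k-subspaces of its own span, whose dimension
   is at most K = k + delta - 1. *)
Lemma card_degenerate_sets_leq n k delta alpha :
  #|degenerate_sets n k delta alpha| <=
  #|F| ^ (n * (k + delta).-1) * 2 ^ #|F| ^ ((k + delta).-1 * k).
Proof.
set K := (k + delta).-1.
pose small := [set W : {vspace 'rV[F]_n} | \dim W <= K].
pose inside W := [set U in grassmannian F n k | (U <= W)%VS].
have sub : degenerate_sets n k delta alpha \subset \bigcup_(W in small) powerset (inside W).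
  apply/subsetP => S; rewrite inE => /and3P [sSG _ lt_dim].
  apply/bigcupP; exists (\sum_(U in S) U)%VS; first by rewrite inE /K; lia.
  rewrite powersetE; apply/subsetP => U US; rewrite inE (subsetP sSG U US) /=.
  exact: sumv_sup US (subvv U).
apply: leq_trans (subset_leq_card sub) _; apply: leq_trans (leq_card_bigcup _ _) _.
have q_gt0 : 0 < #|F| := ltnW (card_finNzRing_gt1 F).
apply: (@leq_trans (\sum_(W in small) 2 ^ #|F| ^ (K * k))).
  apply: leq_sum => W; rewrite inE => dimW; rewrite card_powerset leq_pexp2l //.
  apply: (@leq_trans (#|F| ^ (\dim W * k))).
    apply: card_subspaces_leq => U; rewrite inE => /andP [+ ->].
    by rewrite inE => /eqP ->.
  by rewrite leq_pexp2l ?leq_mul2r ?dimW ?orbT.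
by rewrite sum_nat_const leq_mul2r card_subspaces_rV_leq ?orbT // => W; rewrite inE.
Qed.

Lemma Bq_deletion n k delta alpha s : 0 < alpha ->
  alpha <= s <= #|grassmannian F n k| ->
  (s - Bq F n k delta alpha) * #|grassmannian F n k| ^ alpha <=
  #|degenerate_sets n k delta alpha| * s ^ alpha.
Proof.
move=> alpha_gt0 s_range.
have BadP S : S \in degenerate_sets n k delta alpha ->
    S \subset grassmannian F n k /\ #|S| = alpha.
  by rewrite inE => /and3P [? /eqP ? _].
have [X [sXG avoidX] cX] := deletion_method BadP alpha_gt0 s_range.
have codeX : covering_code k delta alpha X.
  apply/andP; split=> //; apply/forallP => S; apply/implyP => /andP [sSX /eqP cS].
  rewrite leqNgt; apply/negP => lt_dim.
  have SBad : S \in degenerate_sets n k delta alpha.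
    by rewrite inE (subset_trans sSX sXG) cS eqxx lt_dim.
  by have := avoidX S SBad; rewrite sSX.
apply: leq_trans cX; rewrite leq_mul2r leq_sub2l ?orbT //.
exact: leq_bigmax_cond.
Qed.

Lemma Bq_ge_half n k delta alpha s : 0 < alpha ->
  alpha <= s <= #|grassmannian F n k| ->
  2 * #|degenerate_sets n k delta alpha| * s ^ (alpha - 1) <=
    #|grassmannian F n k| ^ alpha ->
  s <= 2 * Bq F n k delta alpha.
Proof.
move=> alpha_gt0 s_range sparse.
have G_gt0 : 0 < #|grassmannian F n k| ^ alpha by rewrite expn_gt0; apply/orP; left; lia.
suff : 2 * (s - Bq F n k delta alpha) <= s by lia.
rewrite -(leq_pmul2r G_gt0) -mulnA.
apply: leq_trans (leq_mul (leqnn 2) (Bq_deletion delta alpha_gt0 s_range)) _.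
set D := #|degenerate_sets _ _ _ _| in sparse *.
have -> : 2 * (D * s ^ alpha) = s * (2 * D * s ^ (alpha - 1)).
  by rewrite -[in LHS](prednK alpha_gt0) expnS subn1; ring.
by rewrite leq_mul2l sparse orbT.
Qed.

(* Large enough for q^(t (alpha - 1)) to absorb both the factor 2 * 2^(q^(K k))
   in the count of degenerate sets and the loss q^(alpha k^2) in the count of
   k-subspaces of F^(k + m). *)
Definition deletion_slack k delta alpha :=
  alpha * k * k + 2 * 2 ^ #|F| ^ ((k + delta).-1 * k).

Lemma degenerate_sets_sparse k m delta alpha e :
  1 < alpha -> (k + delta).-1 + e * (alpha - 1) <= k * alpha ->
  deletion_slack k delta alpha <= e * (k + m) ->
  2 * #|degenerate_sets (k + m) k delta alpha| *
    (#|F| ^ (e * (k + m) - deletion_slack k delta alpha)) ^ (alpha - 1) <=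
  #|grassmannian F (k + m) k| ^ alpha.
Proof.
move=> alpha_gt1 le_exp le_t.
set q := #|F|; set K := (k + delta).-1; set a1 := alpha - 1; set n := k + m.
set t := deletion_slack k delta alpha; set cB := 2 ^ q ^ (K * k).
have q_gt1 : 1 < q := card_finNzRing_gt1 F.
have tpos : 0 < q ^ (t * a1) by rewrite expn_gt0 (ltnW q_gt1).
rewrite -(leq_pmul2r tpos) -mulnA -expnM -expnD mulnBl subnK ?leq_mul2r ?le_t ?orbT //.
apply: (@leq_trans (2 * cB * q ^ (n * K + e * n * a1))).
  have -> : 2 * cB * q ^ (n * K + e * n * a1) = 2 * (q ^ (n * K) * cB * q ^ (e * n * a1)).
    by rewrite expnD; ring.
  by rewrite -mulnA leq_mul2l leq_mul2r card_degenerate_sets_leq !orbT.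
apply: (@leq_trans (2 * cB * q ^ (n * k * alpha))).
  have -> : n * K + e * n * a1 = n * (K + e * a1) by ring.
  by rewrite -(mulnA n k) leq_mul2l leq_exp2l // leq_mul2l le_exp !orbT.
have grow : 2 * cB * q ^ (alpha * k * k) <= q ^ (t * a1).
  apply: (@leq_trans (q ^ t)); last by rewrite leq_exp2l // leq_pmulr /a1; lia.
  rewrite /t /deletion_slack expnD (mulnC (q ^ _)) leq_mul2r; apply/orP; right.
  exact/ltnW/ltn_expl.
have -> : q ^ (n * k * alpha) = q ^ (alpha * k * k) * (q ^ (k * m)) ^ alpha.
  by rewrite -expnM -expnD; congr (q ^ _); rewrite /n; ring.
rewrite mulnA mulnC leq_mul // leq_exp2r; last lia.
exact: card_grassmannian_geq.
Qed.

Lemma Bq_lower k delta alpha e : 0 < delta -> 1 < alpha -> 0 < e ->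
  (k + delta).-1 + e * (alpha - 1) <= k * alpha ->
  exists c N, 0 < c /\ forall n, N <= n -> #|F| ^ (e * n) <= c * Bq F n k delta alpha.
Proof.
move=> delta_gt0 alpha_gt1 e_gt0 le_exp.
set q := #|F|; set t := deletion_slack k delta alpha.
have q_gt1 : 1 < q := card_finNzRing_gt1 F.
have e_le_k : e <= k.
  rewrite -(@leq_pmul2r (alpha - 1)); last lia.
  by move: le_exp; rewrite -{2}(subnK (ltnW alpha_gt1)) mulnDr muln1; lia.
exists (2 * q ^ t), (k + t + alpha); split; first by rewrite muln_gt0 expn_gt0 (ltnW q_gt1).
move=> n le_n; have [m def_n] : exists m, n = k + m by exists (n - k); lia.
subst n.
have := leq_pmull (k + m) e_gt0; set en := e * (k + m) => le_en.
have le_t : t <= en by lia.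
set s := q ^ (en - t).
have s_t : s * q ^ t = q ^ en by rewrite -expnD subnK.
have le_alpha_s : alpha <= s by apply: leq_trans (ltnW (ltn_expl _ q_gt1)); lia.
have le_sG : s <= #|grassmannian F (k + m) k|.
  apply: leq_trans (card_grassmannian_geq F k m); rewrite leq_exp2l //.
  have : en <= k * (k + m) by rewrite leq_mul2r e_le_k orbT.
  have : k * k <= t.
    by rewrite /t /deletion_slack -mulnA (leq_trans _ (leq_addr _ _)) // leq_pmull; lia.
  rewrite mulnDr; lia.
have half : s <= 2 * Bq F (k + m) k delta alpha.
  have sparse := degenerate_sets_sparse (m := m) alpha_gt1 le_exp le_t.
  apply: Bq_ge_half (ltnW alpha_gt1) _ sparse.
  by rewrite le_alpha_s le_sG.
by rewrite -s_t mulnAC leq_mul2r half orbT.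
Qed.
End CoveringCodes.

Theorem mainTheorem15 (F : finFieldType) (k delta alpha : nat) :
  0 < k -> 0 < delta -> 2 <= alpha -> delta <= (alpha - 1) * k ->
  (alpha - 1) %| (delta - 1) ->
  exists c1 c2 N : nat, 0 < c1 /\ 0 < c2 /\
    forall n : nat, N <= n ->
      #|F| ^ ((k - (delta - 1) %/ (alpha - 1)) * n) <= c1 * Bq F n k delta alpha /\
      Bq F n k delta alpha <= c2 * #|F| ^ ((k - (delta - 1) %/ (alpha - 1)) * n).
Proof.
move=> _ delta_gt0 alpha_gt1 le_delta dvd_delta.
set a1 := alpha - 1; set m := (delta - 1) %/ a1.
have alpha_a1 : alpha = a1.+1 by rewrite /a1; lia.
have def_delta : delta - 1 = m * a1 by rewrite divnK.
have lt_mk : m < k by rewrite -(@ltn_pmul2r a1) -?def_delta; lia.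
have le_ma : m * a1 <= k * a1 by rewrite leq_mul2r ltnW ?orbT.
have e_gt0 : 0 < k - m by rewrite subn_gt0.
have le_exp : (k + delta).-1 + (k - m) * a1 <= k * alpha.
  by rewrite alpha_a1 mulnS mulnBl; lia.
have [c [N [c_gt0 lower]]] := Bq_lower F delta_gt0 alpha_gt1 e_gt0 le_exp.
exists c, a1, N; split=> //; split=> [|n le_n]; first lia.
split; first exact: lower.
rewrite (mulnC (k - m)); apply: Bq_upper; first exact: leq_subr.
by rewrite subKn ?(ltnW lt_mk) // alpha_a1 mulSn (mulnC a1) -def_delta; lia.
Qed.
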